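(* Let $G$ be a finitely generated group, and let $\mu$ be a symmetric, finitely supported probability measure on $G$ whose support generates $G$ and such that $\mu(e)>0$. Then the sequence $(\mu^{\ast n})_{n=1}^\infty$ measures index uniformly.
   Context: $\mu^{\ast n}$ is the $n$-fold convolution of $\mu$ (the distribution of the $n$th step of the random walk from the identity with step distribution $\mu$); symmetric means $\mu(x)=\mu(x^{-1})$. A sequence $(\mu_n)$ of probability measures measures index uniformly if $\mu_n(xH)\to1/[G:H]$ uniformly over all $x\in G$ and all subgroups $H$ of $G$, with $1/[G:H]=0$ when $H$ has infinite index. *)

From HB Require Import structures.
From mathcomp Require Import all_boot all_order all_algebra.
From mathcomp Require Import all_classical all_reals.
Set Implicit Arguments. Unset Strict Implicit. Unset Printing Implicit Defensive.
Import Order.TTheory GRing.Theory Num.Theory.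
Local Open Scope classical_set_scope.
Local Open Scope ring_scope.

Section GroupDefs.
Variable G : groupType.

Definition is_subgroup (H : set G) : Prop :=
  H 1%g /\ (forall x y, H x -> H y -> H (x * y^-1)%g).

Definition lcoset (x : G) (H : set G) : set G := [set (x * h)%g | h in H].

Definition cosets (H : set G) : set (set G) := [set lcoset x H | x in [set: G]].

Definition generated (S : set G) : set G :=
  [set x | forall H, is_subgroup H -> S `<=` H -> H x].

Definition generates (S : set G) : Prop := generated S = [set: G].

Definition finitely_generated : Prop :=
  exists S : set G, finite_set S /\ generates S.

Variable R : realType.

(* 1/[G:H], with the convention 1/[G:H] = 0 when the index is infinite *)
Definition inv_index (H : set G) : R :=
  if pselect (finite_set (cosets H))
  then ((xget 0%N [set n | (cosets H #= `I_n)%card])%:R)^-1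
  else 0.

Definition mass_support (mu : G -> R) : set G := [set x | mu x != 0].

Definition conv (nu mu : G -> R) : G -> R :=
  fun x => \sum_(y \in [set: G]) nu y * mu (y^-1 * x)%g.

(* n-fold convolution mu^{*n}: law of the n-th step of the random walk
   started at the identity with step distribution mu *)
Fixpoint convn (mu : G -> R) (n : nat) : G -> R :=
  match n with
  | 0 => fun x => (x == 1%g)%:R
  | n'.+1 => conv (convn mu n') mu
  end.

Definition mass (nu : G -> R) (A : set G) : R := \sum_(x \in A) nu x.

Definition measures_index_uniformly (nu : nat -> G -> R) : Prop :=
  forall eps : R, 0 < eps ->
    exists N : nat, forall n : nat, (N <= n)%N ->
      forall (x : G) (H : set G), is_subgroup H ->
        `| mass (nu n) (lcoset x H) - inv_index H | < eps.

End GroupDefs.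

From mathcomp Require Import all_boot all_order all_algebra.
From mathcomp Require Import all_classical all_reals.
From mathcomp Require Import ring lra.
Import Order.TTheory GRing.Theory Num.Theory.
Local Open Scope classical_set_scope.
Local Open Scope ring_scope.

Set Implicit Arguments. Unset Strict Implicit. Unset Printing Implicit Defensive.

(* Fix a subgroup H and a point x, and let K = x H x^-1.  Then mu^{*n}(xH) is the
   probability of going from the coset K to the coset K x in n steps of the Markov chain
   on right cosets with kernel P(C, D) = mu{s | C s = D}.  This chain is symmetric, lazy
   (P(C, C) >= mu(e)), connected through edges of weight at least alpha, the least
   positive value of mu, and its uniform mass per coset is 1/[G:H] (0 for infinite index).
   For any such chain, while the squared l2 norm of the distribution exceeds
   1/[G:H] + eps, one step lowers it by at least mu(e) alpha eps^4 / 32: on a path from a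
   maximum of the distribution to a point of mass at most 1/[G:H], some edge carries a
   drop of eps^2/4, which the Dirichlet form turns into a loss.  So after N(eps) steps,
   independently of H, the norm is within eps of 1/[G:H]; by symmetry the transition
   probability after 2 N(eps) steps is an inner product of two such distributions,
   hence within eps of 1/[G:H]. *)

Section FinitelySupportedSums.
Variable R : numDomainType.

Definition sqnorm (X : choiceType) (f : X -> R) := \sum_(x \in [set: X]) f x ^+ 2.

Definition pt_mass (X : eqType) (o : X) : X -> R := fun x => (x == o)%:R.

Lemma finite_set_seq (X : choiceType) (A : set X) : finite_set A ->
  exists s : seq X, uniq s /\ forall x, A x -> x \in s.
Proof.
move=> fA; exists (finmap.enum_fset (fset_set A)); split; first exact: finmap.fset_uniq.
by move=> x Ax; rewrite in_fset_set // mem_set.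
Qed.

Lemma fsumT_seq (X : choiceType) (s : seq X) (f : X -> R) :
  uniq s -> (forall x, f x != 0 -> x \in s) ->
  \sum_(x \in [set: X]) f x = \sum_(x <- s) f x.
Proof.
move=> us fs; rewrite (fsbigE s) //.
- by apply: eq_bigl => x; rewrite in_setT.
- by move=> x _ xs; apply/eqP; apply: contraNT xs => /fs.
Qed.

Lemma fsumr_neq0 (X : choiceType) (D : set X) (f : X -> R) :
  \sum_(x \in D) f x != 0 -> exists2 x, D x & f x != 0.
Proof. exact: (@fsbigN1 _ _ _ unit X D (fun=> f) tt). Qed.

Lemma fsumT_pt_mass (X : choiceType) (o : X) (phi : X -> R) :
  \sum_(x \in [set: X]) phi x * pt_mass o x = phi o.
Proof.
rewrite (@fsumT_seq _ [:: o]) ?big_seq1 /pt_mass ?eqxx ?mulr1 // => x.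
by rewrite mulf_eq0 negb_or pnatr_eq0 eqb0 negbK inE => /andP[].
Qed.

Lemma finite_support_pt_mass (X : choiceType) (o : X) :
  finite_set [set x | pt_mass o x != 0].
Proof.
apply: sub_finite_set (finite_set1 o) => x.
by rewrite /= /pt_mass pnatr_eq0 eqb0 negbK => /eqP.
Qed.

Lemma exchange_fsumT (I J : choiceType) (F : I -> J -> R) (A : set I) (B : set J) :
  finite_set A -> finite_set B -> (forall i j, F i j != 0 -> A i /\ B j) ->
  \sum_(i \in [set: I]) \sum_(j \in [set: J]) F i j =
  \sum_(j \in [set: J]) \sum_(i \in [set: I]) F i j.
Proof.
move=> /finite_set_seq[sA [uA cA]] /finite_set_seq[sB [uB cB]] hF.
rewrite (@fsumT_seq _ sA) //; last by move=> i /fsumr_neq0 [j _ /hF [/cA]].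
rewrite (@fsumT_seq _ sB) //; last by move=> j /fsumr_neq0 [i _ /hF [_ /cB]].
rewrite (eq_bigr (fun i => \sum_(j <- sB) F i j)); last first.
  by move=> i _; apply: fsumT_seq => // j /hF [_ /cB].
rewrite exchange_big; apply: eq_bigr => j _.
by apply/esym/fsumT_seq => // i /hF [/cA].
Qed.

Lemma ler_sum_uniq_subset (X : eqType) (t s : seq X) (f : X -> R) :
  uniq t -> uniq s -> {subset t <= s} -> (forall x, 0 <= f x) ->
  \sum_(x <- t) f x <= \sum_(x <- s) f x.
Proof.
move=> ut us ts f0; rewrite [leRHS](bigID (mem t)) /=.
have -> : \sum_(x <- s | x \in t) f x = \sum_(x <- t) f x.
  rewrite -big_filter; apply/perm_big/uniq_perm; rewrite ?filter_uniq // => x.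
  by rewrite mem_filter; apply/andP/idP => [[]//|xt]; split => //; apply: ts.
by rewrite lerDl sumr_ge0.
Qed.

Lemma ler_term_sum (X : eqType) (s : seq X) (f : X -> R) x :
  uniq s -> x \in s -> (forall y, 0 <= f y) -> f x <= \sum_(y <- s) f y.
Proof. by move=> us xs f0; rewrite (bigD1_seq x) //= lerDl sumr_ge0. Qed.

Lemma ler_term_fsumT (X : choiceType) (f : X -> R) x :
  finite_set [set y | f y != 0] -> (forall y, 0 <= f y) ->
  f x <= \sum_(y \in [set: X]) f y.
Proof.
move=> /finite_set_seq[s [us cs]] f0; rewrite (@fsumT_seq _ s) //.
by have [->|/cs xs] := eqVneq (f x) 0; [apply: sumr_ge0 | apply: ler_term_sum].
Qed.

End FinitelySupportedSums.

Lemma inner_le_sqnorm (R : realFieldType) (X : choiceType) (f g : X -> R) :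
  finite_set [set x | f x != 0] -> finite_set [set x | g x != 0] ->
  \sum_(x \in [set: X]) f x * g x <= (sqnorm f + sqnorm g) / 2.
Proof.
move=> ff fg; have /finite_set_seq[s [us sc]] : finite_set
  ([set x | f x != 0] `|` [set x | g x != 0]) by rewrite finite_setU.
have fs x : f x != 0 -> x \in s by move=> fx; apply: sc; left.
have gs x : g x != 0 -> x \in s by move=> gx; apply: sc; right.
rewrite /sqnorm !(@fsumT_seq _ _ s) // => [|x|x|x].
- rewrite -subr_ge0 mulrDl !mulr_suml -big_split -sumrB /=.
  by apply: sumr_ge0 => x _; have := sqr_ge0 (f x - g x); lra.
- by rewrite sqrf_eq0 => /gs.
- by rewrite sqrf_eq0 => /fs.
- by rewrite mulf_eq0 negb_or => /andP[fx _]; apply: fs.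
Qed.

Lemma telescope_big_step (R : realFieldType) (g : nat -> R) j d :
  (0 < j)%N -> d <= g 0%N - g j -> exists2 i, (i < j)%N & d / j%:R <= g i - g i.+1.
Proof.
move=> j0 dj; case: (pselect (exists2 i, (i < j)%N & d / j%:R <= g i - g i.+1)) => //.
move=> small; exfalso; move: dj; apply/negP; rewrite -ltNge.
have -> : g 0%N - g j = \sum_(0 <= i < j) (g i - g i.+1).
  by rewrite (telescope_sumr_eq (fun k => - g k)) // => [|k _]; rewrite opprK addrC.
have -> : d = \sum_(0 <= i < j) d / j%:R.
  by rewrite sumr_const_nat subn0 -(mulr_natr (d / _)) divfK // pnatr_eq0 -lt0n.
apply: ltr_sum_nat => // i /andP[_ ij]; rewrite ltNge; apply/negP => h.
by apply: small; exists i.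
Qed.

Section SymmetricChain.
Variables (R : archiFieldType) (X : choiceType) (Om : set X) (P : X -> X -> R).
Variables (del alp unif : R).
Hypotheses (P_ge0 : forall x y, 0 <= P x y) (P_sym : forall x y, P x y = P y x)
  (P_finite : forall x, finite_set [set y | P x y != 0])
  (P_sum1 : forall x, Om x -> \sum_(y \in [set: X]) P x y = 1)
  (P_closed : forall x y, Om x -> P x y != 0 -> Om y)
  (del_gt0 : 0 < del) (P_lazy : forall x, Om x -> del <= P x x).

Definition step (f : X -> R) y := \sum_(x \in [set: X]) f x * P x y.
Definition nbhd (A : set X) := [set y | exists2 x, A x & P x y != 0].
Definition supp (f : X -> R) := [set x | f x != 0].

Lemma nbhd_finite A : finite_set A -> finite_set (nbhd A).
Proof.
move=> fA; apply: sub_finite_set (bigcup_finite fA (fun x _ => P_finite x)).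
by move=> y [x Ax Pxy]; exists x.
Qed.

Lemma sub_nbhd A : A `<=` Om -> A `<=` nbhd A.
Proof.
move=> AOm x Ax; exists x => //; apply: lt0r_neq0.
exact: lt_le_trans del_gt0 (P_lazy (AOm _ Ax)).
Qed.

Lemma nbhd_closed A : A `<=` Om -> nbhd A `<=` Om.
Proof. by move=> AOm y [x Ax Pxy]; apply: P_closed Pxy; apply: AOm. Qed.

Lemma step_seq f s y : uniq s -> (forall x, f x != 0 -> x \in s) ->
  step f y = \sum_(x <- s) f x * P x y.
Proof.
move=> us fs; rewrite /step (fsumT_seq us) // => x.
by rewrite mulf_eq0 negb_or => /andP[/fs].
Qed.

Lemma row_sum_seq x s : Om x -> uniq s -> (forall y, P x y != 0 -> y \in s) ->
  \sum_(y <- s) P x y = 1.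
Proof. by move=> Ox us Ps; rewrite -(P_sum1 Ox) (fsumT_seq us). Qed.

Lemma supp_step f : supp (step f) `<=` nbhd (supp f).
Proof.
move=> y /fsumr_neq0 [x _]; rewrite mulf_eq0 negb_or.
by case/andP => fx Pxy; exists x.
Qed.

Lemma finite_supp_step f : finite_set (supp f) -> finite_set (supp (step f)).
Proof. by move=> ff; apply: sub_finite_set (@supp_step f) (nbhd_finite ff). Qed.

Lemma sum_step f : finite_set (supp f) -> supp f `<=` Om ->
  \sum_(y \in [set: X]) step f y = \sum_(x \in [set: X]) f x.
Proof.
move=> ff fOm; have [s [us sc]] := finite_set_seq (nbhd_finite ff).
have fs x : f x != 0 -> x \in s by move=> fx; apply/sc/sub_nbhd.
rewrite (@fsumT_seq _ _ _ (step f) us); last by move=> y /supp_step /sc.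
rewrite (fsumT_seq us fs); under eq_bigr do rewrite (step_seq _ us fs).
rewrite exchange_big /=; apply: eq_bigr => x _; rewrite -mulr_sumr.
have [->|fx] := eqVneq (f x) 0; first by rewrite mul0r.
rewrite row_sum_seq ?mulr1 //; first exact: fOm.
by move=> y Pxy; apply: sc; exists x.
Qed.

Lemma step_selfadjoint f g : finite_set (supp f) -> finite_set (supp g) ->
  \sum_(y \in [set: X]) step f y * g y = \sum_(x \in [set: X]) f x * step g x.
Proof.
move=> ff fg; have /finite_set_seq[s [us sc]] : finite_set (supp f `|` supp g).
  by rewrite finite_setU.
have fs x : f x != 0 -> x \in s by move=> fx; apply: sc; left.
have gs x : g x != 0 -> x \in s by move=> gx; apply: sc; right.
rewrite !(@fsumT_seq _ _ s) // => [|x|x]; last 2 first.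
- by rewrite mulf_eq0 negb_or => /andP[fx _]; exact: fs.
- by rewrite mulf_eq0 negb_or => /andP[_ gx]; exact: gs.
under eq_bigr do rewrite (step_seq _ us fs) mulr_suml.
under [RHS]eq_bigr do rewrite (step_seq _ us gs) mulr_sumr.
rewrite exchange_big /=; apply: eq_bigr => x _; apply: eq_bigr => y _.
by rewrite P_sym mulrAC -mulrA mulrC.
Qed.

Section Dirichlet.
Variables (f : X -> R) (ff : finite_set (supp f)) (fOm : supp f `<=` Om).

Let s := finmap.enum_fset (fset_set (nbhd (nbhd (supp f)))).
Let us : uniq s := finmap.fset_uniq _.
Let in_s x : nbhd (nbhd (supp f)) x -> x \in s.
Proof. by move=> h; rewrite in_fset_set ?mem_set //; apply/nbhd_finite/nbhd_finite. Qed.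
Let nbhd_Om : nbhd (supp f) `<=` Om := nbhd_closed fOm.
Let nbhd2 : nbhd (supp f) `<=` nbhd (nbhd (supp f)) := sub_nbhd nbhd_Om.
Let fs x : f x != 0 -> x \in s.
Proof. by move=> fx; apply/in_s/nbhd2/sub_nbhd. Qed.

Let W x x' := \sum_(y <- s) P x y * P x' y.

Let W_ge0 x x' : 0 <= W x x'.
Proof. by apply: sumr_ge0 => y _; rewrite mulr_ge0. Qed.

Let W_row_sum x : f x != 0 -> \sum_(x' <- s) W x x' = 1.
Proof.
move=> fx; rewrite /W exchange_big /=.
under eq_bigr do rewrite -mulr_sumr.
rewrite -[RHS](@row_sum_seq x s) //; last 2 first.
- exact: fOm.
- by move=> y Pxy; apply/in_s/nbhd2; exists x.
apply: eq_bigr => y _; have [->|Pxy] := eqVneq (P x y) 0; first by rewrite !mul0r.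
have Oy : Om y by apply: nbhd_Om; exists x.
rewrite (eq_bigr (P y)) => [|x' _]; last by rewrite P_sym.
rewrite row_sum_seq ?mulr1 // => x' Pyx'.
by apply: in_s; exists y => //; exists x.
Qed.

Let sqnorm_step_gap :
  2 * (sqnorm f - sqnorm (step f)) =
  \sum_(x <- s) \sum_(x' <- s) W x x' * (f x - f x') ^+ 2.
Proof.
have sq_step : sqnorm (step f) = \sum_(x <- s) \sum_(x' <- s) f x * f x' * W x x'.
  rewrite /sqnorm (@fsumT_seq _ _ s) // => [|y]; last first.
    by rewrite sqrf_eq0 => /supp_step /nbhd2 /in_s.
  under eq_bigr do rewrite (step_seq _ us fs) expr2 mulr_suml.
  under eq_bigr do under eq_bigr do rewrite mulr_sumr.
  rewrite exchange_big /=; apply: eq_bigr => x _.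
  rewrite exchange_big /=; apply: eq_bigr => x' _.
  by rewrite /W mulr_sumr; apply: eq_bigr => y _; ring.
have sq_f : sqnorm f = \sum_(x <- s) \sum_(x' <- s) f x ^+ 2 * W x x'.
  rewrite /sqnorm (@fsumT_seq _ _ s) // => [|y]; last by rewrite sqrf_eq0 => /fs.
  apply: eq_bigr => x _; rewrite -mulr_sumr.
  by have [->|/W_row_sum ->] := eqVneq (f x) 0; rewrite ?expr0n /= ?mul0r ?mulr1.
have sq_f' : sqnorm f = \sum_(x <- s) \sum_(x' <- s) f x' ^+ 2 * W x x'.
  rewrite sq_f exchange_big /=; apply: eq_bigr => x _; apply: eq_bigr => x' _.
  by rewrite /W; congr (_ * _); apply: eq_bigr => y _; rewrite mulrC.
rewrite sq_step mulrBr mulr_natl mulr2n {1}sq_f sq_f'.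
rewrite mulr_sumr -big_split -sumrB /=; apply: eq_bigr => x _.
rewrite mulr_sumr -big_split -sumrB /=; apply: eq_bigr => x' _.
by rewrite sqrrB; ring.
Qed.

Lemma sqnorm_step_le : sqnorm (step f) <= sqnorm f.
Proof.
rewrite -subr_ge0 -(pmulr_rge0 _ (ltr0n _ 2)) sqnorm_step_gap.
by apply: sumr_ge0 => x _; apply: sumr_ge0 => x' _; rewrite mulr_ge0 ?W_ge0 ?sqr_ge0.
Qed.

(* Keep the single term [W x0 x1 >= P x0 x0 * P x1 x0 >= del * alp] of the gap. *)
Lemma sqnorm_step_drop x0 x1 : 0 < alp -> f x0 != 0 -> alp <= P x1 x0 ->
  sqnorm (step f) + del * alp / 2 * (f x0 - f x1) ^+ 2 <= sqnorm f.
Proof.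
move=> alp0 fx0 Pa; have x0s : x0 \in s by apply: fs.
have x1s : x1 \in s.
  apply/in_s/nbhd2; exists x0 => //; rewrite P_sym; apply: lt0r_neq0.
  exact: lt_le_trans alp0 Pa.
rewrite -lerBrDl -(ler_pM2l (ltr0n R 2)) sqnorm_step_gap.
apply: le_trans (_ : W x0 x1 * (f x0 - f x1) ^+ 2 <= _).
  have -> : 2%:R * (del * alp / 2 * (f x0 - f x1) ^+ 2) =
     (del * alp) * (f x0 - f x1) ^+ 2 by field.
  apply: ler_wpM2r; first exact: sqr_ge0.
  apply: le_trans (_ : P x0 x0 * P x1 x0 <= _).
    by apply: ler_pM => //; [exact: ltW | exact: ltW | exact: P_lazy (fOm fx0)].
  by apply: (@ler_term_sum _ _ _ (fun y => P x0 y * P x1 y)) => // y; rewrite mulr_ge0.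
apply: le_trans (_ : \sum_(x' <- s) W x0 x' * (f x0 - f x') ^+ 2 <= _).
  apply: (@ler_term_sum _ _ _ (fun x' => W x0 x' * _)) => // y.
  by rewrite mulr_ge0 ?W_ge0 ?sqr_ge0.
apply: (@ler_term_sum _ _ _ (fun x => \sum_(x' <- s) W x x' * _)) => // y.
by apply: sumr_ge0 => x' _; rewrite mulr_ge0 ?W_ge0 ?sqr_ge0.
Qed.

End Dirichlet.

Hypotheses (alp_gt0 : 0 < alp)
  (P_connected : forall x y, Om x -> Om y ->
     exists p : seq X, path (fun a b => alp <= P a b) x p /\ last x p = y)
  (unif_ge0 : 0 <= unif)
  (unif_mass : (unif = 0 /\ ~ finite_set Om) \/
               (finite_set Om /\ unif * \sum_(x \in Om) (1 : R) = 1)).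

Definition is_distr (f : X -> R) := [/\ forall x, 0 <= f x, finite_set (supp f),
  supp f `<=` Om & \sum_(x \in [set: X]) f x = 1].

Lemma is_distr_step f : is_distr f -> is_distr (step f).
Proof.
case=> f0 ff fOm f1; split.
- by move=> y; apply: fsumr_ge0 => x _; rewrite mulr_ge0.
- exact: finite_supp_step.
- by move=> y /supp_step; apply: nbhd_closed.
- by rewrite sum_step.
Qed.

Lemma is_distr_iter n f : is_distr f -> is_distr (iter n step f).
Proof. by move=> df; elim: n => [|n IH] //=; apply: is_distr_step. Qed.

Lemma is_distr_pt_mass (o : X) : Om o -> is_distr (pt_mass R o).
Proof.
move=> Oo; split.
- by move=> x; rewrite ler0n.
- exact: finite_support_pt_mass.
- by move=> x; rewrite /supp /pt_mass /= pnatr_eq0 eqb0 negbK => /eqP ->.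
- by rewrite -(fsumT_pt_mass o (fun=> 1)); apply: eq_fsbigr => x _; rewrite mul1r.
Qed.

Lemma sqnorm_pt_mass (o : X) : sqnorm (pt_mass R o) = 1.
Proof.
rewrite /sqnorm -[RHS](fsumT_pt_mass o (fun=> 1)); apply: eq_fsbigr => x _.
by rewrite mul1r /pt_mass; case: (x == o); rewrite ?expr1n ?expr0n.
Qed.

Lemma distr_exists_neq0 f : is_distr f -> exists x, f x != 0.
Proof.
case=> _ _ _ f1; have : \sum_(x \in [set: X]) f x != 0 by rewrite f1 oner_neq0.
by case/fsumr_neq0 => x _ fx; exists x.
Qed.

(* [sqnorm f] is the [f]-average of the values of [f]. *)
Lemma distr_exists_ge_sqnorm f : is_distr f -> exists x0, f x0 != 0 /\ sqnorm f <= f x0.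
Proof.
move=> df; case: (df) => f0 ff _ f1.
case: (pselect (exists x0, f x0 != 0 /\ sqnorm f <= f x0)) => // nex; exfalso.
have lt x : f x != 0 -> f x < sqnorm f.
  by move=> fx; rewrite ltNge; apply/negP => h; apply: nex; exists x.
have [s [us fs]] := finite_set_seq ff.
have sq_f : sqnorm f = \sum_(x <- s | f x != 0) f x * f x.
  rewrite /sqnorm (@fsumT_seq _ _ s) // => [|y]; last by rewrite sqrf_eq0 => /fs.
  rewrite [RHS]big_mkcond /=; apply: eq_bigr => x _.
  by case: eqP => [->|_]; rewrite ?expr2 ?mul0r.
have sum_f : \sum_(x <- s | f x != 0) f x = 1.
  rewrite -f1 (fsumT_seq us fs) [LHS]big_mkcond /=.
  by apply: eq_bigr => x _; case: eqP => [->|].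
have hs : has (fun x => f x != 0) s.
  by apply/hasP; have [x fx] := distr_exists_neq0 df; exists x => //; apply: fs.
have : \sum_(x <- s | f x != 0) f x * f x < \sum_(x <- s | f x != 0) f x * sqnorm f.
  by apply: ltr_sum hs _ => x fx; rewrite ltr_pM2l ?lt // lt0r fx f0.
by rewrite -mulr_suml sum_f mul1r -sq_f ltxx.
Qed.

Lemma distr_exists_le_unif f : is_distr f -> exists y, Om y /\ f y <= unif.
Proof.
move=> df; case: (df) => f0 ff fOm f1.
case: (pselect (exists y, Om y /\ f y <= unif)) => // nex; exfalso.
have gt y : Om y -> unif < f y.
  by move=> Oy; rewrite ltNge; apply/negP => h; apply: nex; exists y.
case: unif_mass => [[unif0 infOm]|[finOm unif_sum]].
  apply/infOm/(sub_finite_set _ ff) => y Oy.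
  by apply: lt0r_neq0; rewrite -unif0; apply: gt.
have sum_Om : \sum_(x \in Om) f x = 1.
  rewrite -f1; apply: fsbig_widen => // x [_ nOx].
  by have [//|/fOm] := eqVneq (f x) 0.
have [x fx] := distr_exists_neq0 df.
move: sum_Om unif_sum; rewrite !fsbig_finite //=.
set so := finmap.enum_fset (fset_set Om) => sum_Om unif_sum.
have : \sum_(y <- so) unif < \sum_(y <- so) f y.
  rewrite big_seq [ltRHS]big_seq; apply: ltr_sum => [|y].
    by apply/hasP; exists x => //; rewrite /so in_fset_set // mem_set //; apply: fOm.
  by rewrite /so in_fset_set // => /set_mem; apply: gt.
by rewrite sum_Om -(mulr1 unif) -mulr_sumr unif_sum ltxx.
Qed.

Lemma distr_size_le f (t : seq X) c : is_distr f -> uniq t -> 0 <= c ->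
  (forall v, v \in t -> c < f v) -> (size t)%:R * c <= 1.
Proof.
case=> f0 ff _ f1 ut c0 tf; have [s [us fs]] := finite_set_seq ff.
apply: le_trans (_ : \sum_(v <- t) f v <= _).
  rewrite mulrC mulr_natr -iter_addr_0 -count_predT -big_const_seq big_seq [leRHS]big_seq.
  by apply: ler_sum => v /tf /ltW.
rewrite -f1 (fsumT_seq us fs); apply: ler_sum_uniq_subset => // v vt.
by apply: fs; apply: lt0r_neq0; apply: le_lt_trans c0 (tf _ vt).
Qed.

(* The vertices before the first one of mass at most [unif + a/2] have mass above
   [a/2] each, so there are at most [2/a] of them; the drop of [a/2] over them thus
   has a step of at least [a^2/4]. *)
Lemma distr_path_big_step f x0 p a : is_distr f -> uniq (x0 :: p) -> 0 < a ->
  unif + a <= f x0 -> f (last x0 p) <= unif ->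
  exists2 i, (i < size p)%N & f (nth x0 (x0 :: p) i) != 0 /\
    a ^+ 2 / 4 <= f (nth x0 (x0 :: p) i) - f (nth x0 p i).
Proof.
move=> df uq a0 hx0 hlast; set q := x0 :: p.
pose low v := f v <= unif + a / 2.
set j := find low q.
have has_low : has low q.
  apply/hasP; exists (last x0 p); first exact: mem_last.
  by apply: le_trans hlast _; rewrite lerDl divr_ge0 // ltW.
have low_j : low (nth x0 q j) := nth_find x0 has_low.
have jq : (j < size q)%N by rewrite -has_find.
have j0 : (0 < j)%N.
  by rewrite lt0n; apply/eqP => j0; move: low_j; rewrite j0 /low /=; lra.
have high i : (i < j)%N -> unif + a / 2 < f (nth x0 q i).
  by move=> ij; have := before_find x0 ij; rewrite /low ltNge => ->.
have j_small : j%:R * (a / 2) <= 1.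
  have tj : size (take j q) = j by rewrite size_takel // ltnW.
  rewrite -[X in X%:R]tj; apply: (distr_size_le df (take_uniq _ uq)).
    by rewrite divr_ge0 // ltW.
  move=> v /(nthP x0) [i]; rewrite tj => ij <-; rewrite nth_take //.
  by apply: le_lt_trans (high _ ij); rewrite lerDr.
have drop : a / 2 <= f (nth x0 q 0) - f (nth x0 q j).
  by move: low_j; rewrite /low /=; lra.
have [i ij step_i] := @telescope_big_step _ (fun k => f (nth x0 q k)) _ _ j0 drop.
exists i; first by apply: leq_trans ij _; rewrite -ltnS.
split.
  by apply/lt0r_neq0/le_lt_trans/high/ij; rewrite addr_ge0 // divr_ge0 // ltW.
apply: le_trans step_i; rewrite -[a ^+ 2 / 4](@mulfK _ j%:R) ?pnatr_eq0 -?lt0n //.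
apply: ler_wpM2r; first by rewrite invr_ge0 ler0n.
have -> : a ^+ 2 / 4 * j%:R = j%:R * (a / 2) * (a / 2) by rewrite expr2; field.
by rewrite -[leRHS]mul1r ler_wpM2r // divr_ge0 // ltW.
Qed.

Definition decrement (eps : R) := del * alp * eps ^+ 4 / 32.

Lemma sqnorm_step_decay f eps : is_distr f -> 0 < eps -> eps <= sqnorm f - unif ->
  sqnorm (step f) <= sqnorm f - decrement eps.
Proof.
move=> df eps0 epsa; case: (df) => f0 ff fOm f1.
set a := sqnorm f - unif in epsa.
have a0 : 0 < a by apply: lt_le_trans epsa.
have [x0 [fx0 hx0]] := distr_exists_ge_sqnorm df.
have [y [Oy fy]] := distr_exists_le_unif df.
have [p [pp lp]] := P_connected (fOm _ fx0) Oy.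
case: (shortenP pp) lp => p' pp' up' _ lp.
have [||i ip' [fi drop_i]] := distr_path_big_step df up' a0.
- by rewrite /a addrC subrK.
- by rewrite lp.
have edge : alp <= P (nth x0 p' i) (nth x0 (x0 :: p') i).
  by rewrite P_sym; apply: (pathP x0 pp').
have := sqnorm_step_drop ff fOm alp_gt0 fi edge.
set d := _ - _ in drop_i *; move=> loss.
have d_ge : eps ^+ 2 / 4 <= d.
  apply: le_trans drop_i; rewrite ler_pM2r ?invr_gt0 ?ltr0n //.
  by apply: lerXn2r => //; rewrite nnegrE ltW.
have d2_ge : (eps ^+ 2 / 4) ^+ 2 <= d ^+ 2.
  have e0 : 0 <= eps ^+ 2 / 4 by rewrite divr_ge0 ?sqr_ge0.
  by apply: lerXn2r => //; rewrite nnegrE //; apply: le_trans d_ge.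
have : decrement eps <= del * alp / 2 * d ^+ 2.
  have -> : decrement eps = del * alp / 2 * (eps ^+ 2 / 4) ^+ 2 by rewrite /decrement; field.
  by apply: ler_wpM2l => //; rewrite divr_ge0 // mulr_ge0 // ltW.
by move: loss; set u := del * alp / 2 * d ^+ 2; lra.
Qed.

Lemma finite_supp_iter n f : finite_set (supp f) -> finite_set (supp (iter n step f)).
Proof. by move=> ff; elim: n => [|n IH] //=; apply: finite_supp_step. Qed.

Lemma iter_step_selfadjoint n f g : finite_set (supp f) -> finite_set (supp g) ->
  \sum_(y \in [set: X]) iter n step f y * g y = \sum_(x \in [set: X]) f x * iter n step g x.
Proof.
elim: n g => [|n IH] g ff fg //=.
rewrite step_selfadjoint; last 2 first; [exact: finite_supp_iter | exact: fg |].
by rewrite IH -?iterSr //; apply: finite_supp_step.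
Qed.

Lemma sqnorm_iter_step_le f m n : is_distr f -> (m <= n)%N ->
  sqnorm (iter n step f) <= sqnorm (iter m step f).
Proof.
move=> df; elim: n => [|n IH]; first by rewrite leqn0 => /eqP ->.
rewrite leq_eqVlt => /orP[/eqP -> //|]; rewrite ltnS => /IH; apply: le_trans.
by case: (is_distr_iter n df) => _ ff fOm _; apply: sqnorm_step_le.
Qed.

Definition mixing_time (eps : R) := (Num.truncn (decrement eps)^-1).+1.

Lemma decrement_gt0 eps : 0 < eps -> 0 < decrement eps.
Proof. by move=> eps0; rewrite /decrement divr_gt0 // !mulr_gt0 // exprn_gt0. Qed.

Lemma mixing_time_gt eps : 0 < eps -> 1 < (mixing_time eps)%:R * decrement eps.
Proof.
by move=> /decrement_gt0 c0; rewrite -ltr_pdivrMr // div1r truncnS_gt.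
Qed.

Lemma sqnorm_iter_hits f eps : is_distr f -> 0 < eps -> sqnorm f <= 1 ->
  exists2 t, (t <= mixing_time eps)%N & sqnorm (iter t step f) - unif < eps.
Proof.
move=> df eps0 f1; set N := mixing_time eps.
pose close t := sqnorm (iter t step f) - unif < eps.
case: (pselect (exists2 t, (t <= N)%N & close t)) => // nex; exfalso.
have far t : (t <= N)%N -> eps <= sqnorm (iter t step f) - unif.
  by move=> ht; rewrite leNgt; apply/negP => h; apply: nex; exists t.
have decay t : (t <= N)%N -> sqnorm (iter t step f) <= 1 - t%:R * decrement eps.
  elim: t => [_|t IH ht]; first by rewrite mul0r subr0.
  have := sqnorm_step_decay (is_distr_iter t df) eps0 (far t (ltnW ht)).
  have := IH (ltnW ht); rewrite -natr1 mulrDl mul1r /=; lra.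
have := decay _ (leqnn _); have := far _ (leqnn N).
have := mixing_time_gt eps0; move: unif_ge0 eps0; lra.
Qed.

Lemma sqnorm_iter_lt f eps n : is_distr f -> 0 < eps -> sqnorm f <= 1 ->
  (mixing_time eps <= n)%N -> sqnorm (iter n step f) - unif < eps.
Proof.
move=> df eps0 f1 hn; have [t tN close] := sqnorm_iter_hits df eps0 f1.
apply: le_lt_trans close; rewrite lerD2r; apply: sqnorm_iter_step_le => //.
exact: leq_trans tN hn.
Qed.

(* Expand [\sum_(x \in Om) (g x + h x - 2 unif)^2 >= 0], using [unif |Om| = 1]. *)
Lemma inner_ge_unif g h : is_distr g -> is_distr h ->
  4 * unif <= sqnorm g + sqnorm h + 2 * \sum_(x \in [set: X]) g x * h x.
Proof.
case=> g0 fg gOm g1 [h0 fh hOm h1].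
case: unif_mass => [[-> _]|[finOm unif_sum]].
  rewrite mulr0 addr_ge0 ?mulr_ge0 ?addr_ge0 ?fsumr_ge0 // => x _.
  - exact: sqr_ge0.
  - exact: sqr_ge0.
  - exact: mulr_ge0.
move: unif_sum; rewrite fsbig_finite //=.
set so := finmap.enum_fset (fset_set Om) => unif_sum.
have us : uniq so by apply: finmap.fset_uniq.
have in_so x : Om x -> x \in so by move=> Ox; rewrite /so in_fset_set // mem_set.
have gs x : g x != 0 -> x \in so by move=> gx; apply/in_so/gOm.
have hs x : h x != 0 -> x \in so by move=> hx; apply/in_so/hOm.
move: g1 h1; rewrite /sqnorm !(@fsumT_seq _ _ so) // => [g1 h1|x|x|x]; last 3 first.
- by rewrite mulf_eq0 negb_or => /andP[gx _]; apply: gs.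
- by rewrite sqrf_eq0; apply: hs.
- by rewrite sqrf_eq0; apply: gs.
have : 0 <= \sum_(x <- so) (g x + h x - 2 * unif) ^+ 2.
  by apply: sumr_ge0 => x _; apply: sqr_ge0.
rewrite (eq_bigr (fun x => g x ^+ 2 + h x ^+ 2 + 2 * (g x * h x) +
   4 * unif * (unif * 1) - 4 * unif * (g x + h x))) => [|x _]; last by ring.
rewrite sumrB !big_split /= -!mulr_sumr big_split /= unif_sum g1 h1; lra.
Qed.

Lemma inner_near_unif g h : is_distr g -> is_distr h ->
  `| \sum_(x \in [set: X]) g x * h x - unif | <=
    ((sqnorm g - unif) + (sqnorm h - unif)) / 2.
Proof.
move=> dg dh; have lo := inner_ge_unif dg dh.
case: (dg) => _ fg _ _; case: (dh) => _ fh _ _; have up := inner_le_sqnorm fg fh.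
rewrite ler_norml; apply/andP; split; move: lo up; set u := \sum_(x \in _) _; lra.
Qed.

Lemma iter_step_pt_mass eps n o z : 0 < eps -> (2 * mixing_time eps <= n)%N ->
  Om o -> Om z -> `| iter n step (pt_mass R o) z - unif | < eps.
Proof.
move=> eps0 hn Oo Oz; set N := mixing_time eps.
have hN : (N + N <= n)%N by rewrite addnn -mul2n.
have Nn : (N <= n)%N := leq_trans (leq_addr N N) hN.
have nN : (N <= n - N)%N by rewrite leq_subRL.
have pt1 (w : X) : sqnorm (pt_mass R w) <= 1 by rewrite sqnorm_pt_mass.
rewrite -(fsumT_pt_mass z (iter n step _)) -(subnKC Nn).
rewrite iterD iter_step_selfadjoint; last 2 first.
- exact/finite_supp_iter/finite_support_pt_mass.
- exact: finite_support_pt_mass.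
apply: le_lt_trans (inner_near_unif (is_distr_iter _ (is_distr_pt_mass Oo))
                                  (is_distr_iter _ (is_distr_pt_mass Oz))) _.
have := sqnorm_iter_lt (is_distr_pt_mass Oo) eps0 (pt1 o) nN.
have := sqnorm_iter_lt (is_distr_pt_mass Oz) eps0 (pt1 z) (leqnn N).
lra.
Qed.
End SymmetricChain.

Section RightCosets.
Variable G : groupType.
Local Open Scope group_scope.

Definition rcos (K : set G) (g : G) : set G := [set k * g | k in K].
Definition rtrans (C : set G) (s : G) : set G := [set c * s | c in C].

Lemma rtransK C s : rtrans (rtrans C s) s^-1 = C.
Proof.
apply/seteqP; split => [y [z [c Cc <-] <-]|y Cy]; first by rewrite mulgK.
by exists (y * s); [exists y | rewrite mulgK].
Qed.

Lemma rtrans_rcos K g s : rtrans (rcos K g) s = rcos K (g * s).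
Proof.
apply/seteqP; split => [y [z [k Kk <-] <-]|y [k Kk <-]].
  by exists k => //; rewrite mulgA.
by exists (k * g); [exists k | rewrite mulgA].
Qed.

Lemma rtrans1 C : rtrans C 1 = C.
Proof.
apply/seteqP; split => [y [c Cc <-]|y Cy]; first by rewrite mulg1.
by exists y => //; rewrite mulg1.
Qed.

Lemma lcoset_rcos_conj (H : set G) x :
  lcoset x H = rcos [set x * h * x^-1 | h in H] x.
Proof.
apply/seteqP; split => [y [h Hh <-]|y [k [h Hh <-] <-]].
  by exists (x * h * x^-1); [exists h | rewrite mulgVK].
by exists h => //; rewrite mulgVK.
Qed.

Section Subgroup.
Variable H : set G.
Hypothesis sH : is_subgroup H.

Lemma subgroup1 : H 1. Proof. by case: sH. Qed.

Lemma subgroupV y : H y -> H y^-1.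
Proof. by move=> Hy; case: sH => H1 HM; have := HM _ _ H1 Hy; rewrite mul1g. Qed.

Lemma subgroupM a b : H a -> H b -> H (a * b).
Proof. by move=> Ha /subgroupV Hb; case: sH => _ HM; have := HM _ _ Ha Hb; rewrite invgK. Qed.

Lemma conj_subgroup x : is_subgroup [set x * h * x^-1 | h in H].
Proof.
split; first by exists 1; [exact: subgroup1 | rewrite mulg1 mulgV].
move=> a b [h1 H1 <-] [h2 H2 <-].
exists (h1 * h2^-1); first by apply: subgroupM => //; apply: subgroupV.
by rewrite !invgM invgK !mulgA mulgVK.
Qed.

Lemma rcos_eq g y : rcos H g y <-> rcos H y = rcos H g.
Proof.
split=> [[k Hk <-]|<-]; last by exists 1; [exact: subgroup1 | rewrite mul1g].
apply/seteqP; split => [z [k' Hk' <-]|z [k' Hk' <-]].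
  by exists (k' * k); [exact: subgroupM | rewrite mulgA].
exists (k' * k^-1); first by apply: subgroupM => //; apply: subgroupV.
by rewrite -mulgA mulKg.
Qed.

End Subgroup.

Lemma generates_prod (S : set G) : (forall s, S s -> S s^-1) -> generates S ->
  forall x, exists2 l : seq G, all (fun s => `[< S s >]) l & x = \prod_(s <- l) s.
Proof.
move=> S_sym gS x.
pose W := [set y | exists2 l : seq G, all (fun s => `[< S s >]) l & y = \prod_(s <- l) s].
have /(_ W) : generated S x by rewrite gS.
apply=> [|s Ss]; last by exists [:: s]; rewrite ?big_seq1 //= andbT; apply/asboolP.
split; first by exists [::]; rewrite ?big_nil.
move=> _ _ [l1 S1 ->] [l2 S2 ->]; exists (l1 ++ map (fun s => s^-1) (rev l2)).
  rewrite all_cat S1 all_map all_rev /=; apply/allP => s /(allP S2) /asboolP Ss.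
  exact/asboolP/S_sym.
by rewrite big_cat big_map prodgV revK.
Qed.

End RightCosets.

Section CosetWalk.
Variables (R : realType) (G : groupType) (mu : G -> R).
Hypotheses (mu_ge0 : forall x, 0 <= mu x) (mu_finite : finite_set (mass_support mu))
  (mu_sum1 : \sum_(x \in [set: G]) mu x = 1) (mu_sym : forall x, mu x = mu (x^-1)%g)
  (mu_gen : generates (mass_support mu)).

Definition trans_prob (C D : set G) : R :=
  \sum_(s \in [set: G]) mu s * (rtrans C s == D)%:R.

Lemma trans_prob_ge0 C D : 0 <= trans_prob C D.
Proof. by apply: fsumr_ge0 => s _; rewrite mulr_ge0. Qed.

Lemma trans_prob_sym C D : trans_prob C D = trans_prob D C.
Proof.
rewrite /trans_prob [RHS](reindex_fsbigT (fun s => s^-1)%g); last first.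
  exact: (Bijective invgK invgK).
apply: eq_fsbigr => s _; rewrite -mu_sym; congr (_ * (_ : bool)%:R).
apply/eqP/eqP => [<-|<-]; first exact: rtransK.
by have := rtransK D s^-1; rewrite invgK.
Qed.

Lemma trans_prob_neq0 C D : trans_prob C D != 0 -> exists2 s, mu s != 0 & D = rtrans C s.
Proof.
move=> /fsumr_neq0 [s _]; rewrite mulf_eq0 negb_or pnatr_eq0 eqb0 negbK.
by case/andP => ms /eqP <-; exists s.
Qed.

Lemma trans_prob_finite C : finite_set [set D | trans_prob C D != 0].
Proof.
apply: sub_finite_set (finite_image (rtrans C) mu_finite) => D /trans_prob_neq0 [s ms ->].
by exists s.
Qed.

Lemma trans_prob_sum1 C : \sum_(D \in [set: set G]) trans_prob C D = 1.
Proof.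
rewrite /trans_prob (@exchange_fsumT _ _ _ _ (rtrans C @` mass_support mu) (mass_support mu)).
- apply: etrans mu_sum1; apply: eq_fsbigr => s _; rewrite -mulr_fsumr.
  rewrite (@fsumT_seq _ _ [:: rtrans C s]) ?big_seq1 ?eqxx ?mulr1 // => D.
  by rewrite mem_seq1 pnatr_eq0 eqb0 negbK eq_sym.
- exact: finite_image.
- exact: mu_finite.
move=> D s; rewrite mulf_eq0 negb_or pnatr_eq0 eqb0 negbK => /andP[ms /eqP <-].
by split => //; exists s.
Qed.

Lemma trans_prob_ge C s : mu s <= trans_prob C (rtrans C s).
Proof.
apply: le_trans (_ : mu s * (rtrans C s == rtrans C s)%:R <= _); first by rewrite eqxx mulr1.
apply: (@ler_term_fsumT _ _ (fun t => mu t * (rtrans C t == rtrans C s)%:R)).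
  by apply: sub_finite_set mu_finite => t; rewrite /= mulf_eq0 negb_or => /andP[].
by move=> t; rewrite mulr_ge0.
Qed.

Lemma trans_prob_diag C : mu 1%g <= trans_prob C C.
Proof. by have := trans_prob_ge C 1%g; rewrite rtrans1. Qed.

Lemma mass_support_min : exists2 alp : R, 0 < alp & forall s, mu s != 0 -> alp <= mu s.
Proof.
have [l [_ cl]] := finite_set_seq mu_finite.
suff [a a0 ha] : exists2 a : R, 0 < a & forall s, s \in l -> mu s != 0 -> a <= mu s.
  by exists a => // s ms; apply: ha => //; apply: cl.
elim: l {cl} => [|t l [a a0 ha]]; first by exists 1.
exists (Num.min a (if mu t != 0 then mu t else 1)).
  rewrite lt_min a0 /=; case: ifP => [mt|_]; [by rewrite lt0r mt mu_ge0 | exact: ltr01].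
move=> s; rewrite inE => /orP[/eqP ->|sl] ms; first by rewrite ge_min ms lexx orbT.
by rewrite ge_min ha.
Qed.

Definition rcosets (K : set G) := [set rcos K g | g in [set: G]].

Lemma trans_prob_closed K C D : rcosets K C -> trans_prob C D != 0 -> rcosets K D.
Proof.
by case=> g _ <- /trans_prob_neq0 [s _ ->]; exists (g * s)%g => //; rewrite rtrans_rcos.
Qed.

Lemma trans_prob_path K alp : (forall s, mu s != 0 -> alp <= mu s) ->
  forall l g, all (fun s => `[< mass_support mu s >]) l ->
  exists p, path (fun a b => alp <= trans_prob a b) (rcos K g) p /\
            last (rcos K g) p = rcos K (g * \prod_(s <- l) s)%g.
Proof.
move=> alp_le; elim=> [|s l IH] g /=; first by exists [::]; rewrite big_nil mulg1.
case/andP => /asboolP ms /(IH (g * s)%g) [p [pp lp]].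
exists (rcos K (g * s)%g :: p); split; last by rewrite /= lp big_cons mulgA.
rewrite /= pp andbT -rtrans_rcos; apply: le_trans (trans_prob_ge _ s).
exact: alp_le.
Qed.

Lemma trans_prob_connected K alp : (forall s, mu s != 0 -> alp <= mu s) ->
  forall C D, rcosets K C -> rcosets K D ->
  exists p, path (fun a b => alp <= trans_prob a b) C p /\ last C p = D.
Proof.
move=> alp_le C D [g _ <-] [g' _ <-].
have S_sym s : mass_support mu s -> mass_support mu (s^-1)%g.
  by rewrite /mass_support /= -mu_sym.
have [l Sl el] := generates_prod S_sym mu_gen (g^-1 * g')%g.
have [p [pp lp]] := trans_prob_path K alp_le g Sl.
by exists p; rewrite lp -el mulVKg.
Qed.

Lemma convn_finite n : finite_set (mass_support (convn mu n)).
Proof.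
elim: n => [|n IH].
  apply: sub_finite_set (finite_set1 1%g) => x /=.
  by rewrite /mass_support /= pnatr_eq0 eqb0 negbK => /eqP.
apply: sub_finite_set (finite_image (fun p => (p.1 * p.2)%g) (finite_setX IH mu_finite)) => g.
move=> /fsumr_neq0 [y _]; rewrite mulf_eq0 negb_or => /andP[vy my].
by exists (y, (y^-1 * g)%g) => //=; rewrite mulVKg.
Qed.

Definition coset_law K n (C : set G) : R :=
  \sum_(g \in [set: G]) convn mu n g * (rcos K g == C)%:R.

Lemma coset_law_S K n : coset_law K n.+1 = step trans_prob (coset_law K n).
Proof.
apply: funext => D; set v := convn mu n.
have fv : finite_set (mass_support v) by apply: convn_finite.
have -> : coset_law K n.+1 D = \sum_(y \in [set: G]) v y * trans_prob (rcos K y) D.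
  rewrite /coset_law /= /conv.
  under eq_fsbigr do rewrite mulr_fsuml.
  rewrite (@exchange_fsumT _ _ _ _
     [set (p.1 * p.2)%g | p in mass_support v `*` mass_support mu] (mass_support v)).
  - apply: eq_fsbigr => y _.
    under eq_fsbigr do rewrite -mulrA.
    rewrite -mulr_fsumr; congr (_ * _).
    rewrite (reindex_fsbigT (fun s => y * s)%g); last exact: (Bijective (mulKg y) (mulVKg y)).
    by apply: eq_fsbigr => s _; rewrite mulKg rtrans_rcos.
  - exact: finite_image (finite_setX fv mu_finite).
  - exact: fv.
  move=> g y; rewrite !mulf_eq0 !negb_or => /andP[/andP[vy my] _]; split => //.
  by exists (y, (y^-1 * g)%g) => //=; rewrite mulVKg.
rewrite /step /coset_law; under [RHS]eq_fsbigr do rewrite mulr_fsuml.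
rewrite (@exchange_fsumT _ _ _ _ (rcos K @` mass_support v) (mass_support v)).
- apply: eq_fsbigr => y _.
  rewrite -(fsumT_pt_mass (rcos K y) (fun C => v y * trans_prob C D)).
  by apply: eq_fsbigr => C _; rewrite /pt_mass eq_sym mulrAC.
- exact: finite_image.
- exact: fv.
move=> C y; rewrite !mulf_eq0 !negb_or => /andP[/andP[vy]].
by rewrite pnatr_eq0 eqb0 negbK => /eqP <- _; split => //; exists y.
Qed.

Lemma coset_law_iter K n :
  coset_law K n = iter n (step trans_prob) (pt_mass R (rcos K 1%g)).
Proof.
elim: n => [|n IH]; last by rewrite coset_law_S IH.
apply: funext => C; rewrite /coset_law /=.
under eq_fsbigr do rewrite mulrC.
by rewrite (fsumT_pt_mass 1%g (fun g => (rcos K g == C)%:R)) /pt_mass eq_sym.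
Qed.

Lemma mass_rcos K g n : is_subgroup K ->
  mass (convn mu n) (rcos K g) = coset_law K n (rcos K g).
Proof.
move=> sK; rewrite /mass /coset_law fsbig_mkcond; apply: eq_fsbigr => y _.
rewrite /patch; case: ifPn => [/set_mem /(rcos_eq sK) ->|/negP yn].
  by rewrite eqxx mulr1.
case: eqP => [e|_]; last by rewrite mulr0.
by exfalso; apply/yn/mem_set/(rcos_eq sK).
Qed.

End CosetWalk.

Section Index.
Variables (R : realType) (G : groupType) (H : set G) (x : G).
Hypothesis sH : is_subgroup H.
Let K := [set (x * h * x^-1)%g | h in H].

(* [C |-> C^-1 x] maps the right cosets of [K = x H x^-1] bijectively onto the left
   cosets of [H]. *)
Let flip (C : set G) := [set (c^-1 * x)%g | c in C].

Let flip_rcos g : flip (rcos K g) = lcoset (g^-1 * x)%g H.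
Proof.
apply/seteqP; split => [y [c [k [h Hh <-] <-] <-]|y [h Hh <-]].
  exists h^-1%g; first exact: subgroupV.
  by rewrite !invgM !invgK !mulgA mulgVK.
exists (x * h^-1 * x^-1 * g)%g.
  by exists (x * h^-1 * x^-1)%g => //; exists h^-1%g => //; apply: subgroupV.
by rewrite !invgM !invgK !mulgA mulgVK.
Qed.

Let flip_inj : injective flip.
Proof.
have sub C D : flip C = flip D -> C `<=` D.
  move=> e c Cc; have : flip D (c^-1 * x)%g by rewrite -e; exists c.
  by case=> d Dd /mulIg /invg_inj <-.
by move=> C D e; apply/seteqP; split; apply: sub.
Qed.

Let cosets_flip : cosets H = flip @` rcosets K.
Proof.
apply/seteqP; split => [C [y _ <-]|C [D [g _ <-] <-]].
  exists (rcos K (x * y^-1)%g); first by exists (x * y^-1)%g.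
  by rewrite flip_rcos invgM invgK mulgVK.
by rewrite flip_rcos; exists (g^-1 * x)%g.
Qed.

Lemma inv_index_ge0 : 0 <= inv_index R H.
Proof. by rewrite /inv_index; case: pselect => fin; rewrite ?invr_ge0 ?ler0n. Qed.

Lemma inv_index_rcosets : (inv_index R H = 0 /\ ~ finite_set (rcosets K)) \/
  (finite_set (rcosets K) /\ inv_index R H * \sum_(C \in rcosets K) (1 : R) = 1).
Proof.
rewrite /inv_index; case: pselect => fin; last first.
  by left; split => // finK; apply: fin; rewrite cosets_flip; apply: finite_image.
have finK : finite_set (rcosets K).
  apply: sub_finite_set (finite_preimage (f := flip) (B := cosets H) _ fin).
    by move=> C KC; rewrite /preimage /= cosets_flip; exists C.
  by move=> C D _ _; apply: flip_inj.
right; split => //; set n := xget 0%N _.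
have cn : (cosets H #= `I_n)%card by exact: (xgetPex 0%N fin).
have -> : \sum_(C \in rcosets K) (1 : R) = \sum_(D \in cosets H) (1 : R).
  by rewrite cosets_flip (fsbig_image _ flip) // => C D _ _; apply: flip_inj.
rewrite fsbig_finite //= big_const_seq count_predT iter_addr_0 (card_fset_set cn).
rewrite -[1 *+ n]/(n%:R) mulVf // pnatr_eq0; apply/eqP => n0.
move: cn; rewrite n0 II0 card_eq0 => /eqP no_cosets.
have : cosets H H.
  exists 1%g => //; apply/seteqP; split => [y [h Hh <-]|y Hy]; first by rewrite mul1g.
  by exists y => //; rewrite mul1g.
by rewrite no_cosets.
Qed.

End Index.

Theorem theorem1p14 (R : realType) (G : groupType) (mu : G -> R) :
  finitely_generated G ->
  (forall x : G, 0 <= mu x) ->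
  finite_set (mass_support mu) ->
  \sum_(x \in [set: G]) mu x = 1 ->
  (forall x : G, mu x = mu (x^-1)%g) ->
  generates (mass_support mu) ->
  0 < mu 1%g ->
  measures_index_uniformly (fun n : nat => convn mu n.+1).
Proof.
(* Finite generation is implied by [mass_support mu] being finite and generating. *)
move=> _ mu_ge0 mu_finite mu_sum1 mu_sym mu_gen mu1_gt0 eps eps_gt0.
have [alp alp_gt0 alp_le] := mass_support_min mu_ge0 mu_finite.
exists (2 * mixing_time (mu 1%g) alp eps)%N => n hn x H sH.
rewrite lcoset_rcos_conj; set K := [set _ | h in H].
rewrite mass_rcos ?coset_law_iter //; last exact: conj_subgroup.
apply: (@iter_step_pt_mass _ _ (rcosets K) _ (mu 1%g) alp (inv_index R H)) => //.
- exact: trans_prob_ge0.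
- exact: trans_prob_sym.
- exact: trans_prob_finite.
- by move=> C _; apply: trans_prob_sum1.
- exact: trans_prob_closed.
- by move=> C _; apply: trans_prob_diag.
- exact: trans_prob_connected.
- exact: inv_index_ge0.
- exact: inv_index_rcosets.
- exact: leq_trans hn (leqnSn n).
- by exists 1%g.
- by exists x.
Qed.
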